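(* Let $k,m$ be integers with $k\geqslant 2$ and $m>2k$, and let $n=2k-2$. Then $\alpha(m,n,k)=h(m,n,k)$. Moreover, every $(m,2k-2,k)$-intersecting family of maximum cardinality is of the form \[ \binom{[2k-2]}{k}\cup\{F\cup\{b\}\mid F\in\mathcal{F}^*,\ b\in[2k-1,m]\}, \] where $\mathcal{F}^*$ is an intersecting family of $(k-1)$-subsets of $[2k-2]$ of maximum cardinality.
   Context: For positive integers $a\leqslant b$, $[a,b]=\{a,a+1,\dots,b\}$ and $[a]=[1,a]$; $\binom{X}{k}$ denotes the family of all $k$-subsets of a set $X$. A family of sets is intersecting if no two of its members are disjoint. For integers $0<k\leqslant n<2k<m$, an $(m,n,k)$-intersecting family is an intersecting family $\mathcal{F}$ with $\binom{[n]}{k}\subseteq\mathcal{F}\subseteq\binom{[m]}{k}$, and $\alpha(m,n,k)$ is the maximum cardinality of an $(m,n,k)$-intersecting family. Define $h(m,n,k)=\binom{n}{k}+\sum_{i=1}^{2k-n-1}\binom{n-1}{k-i-1}\binom{m-n}{i}$. *)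

(* Ground set [m] = {1..m} is modelled by 'I_m, where the
   ordinal i stands for the integer i+1. Hence [a] = {i : 'I_m | i < a}
   and [a,b] = {i : 'I_m | a-1 <= i < b}. *)
From mathcomp Require Import all_boot.
Set Implicit Arguments. Unset Strict Implicit. Unset Printing Implicit Defensive.

Definition intersecting (T : finType) (F : {set {set T}}) : bool :=
  [forall A in F, forall B in F, A :&: B != set0].

Definition seg (m a : nat) : {set 'I_m} := [set i : 'I_m | i < a].

Arguments seg : clear implicits.

Definition ksubsets (m a k : nat) : {set {set 'I_m}} :=
  [set A : {set 'I_m} | (#|A| == k) && (A \subset seg m a)].

Arguments ksubsets : clear implicits.

Definition mnk_intersecting (m n k : nat) (F : {set {set 'I_m}}) : bool :=
  [&& intersecting F, ksubsets m n k \subset F & F \subset ksubsets m m k].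

Arguments mnk_intersecting : clear implicits.

Definition alpha (m n k : nat) : nat :=
  \max_(F : {set {set 'I_m}} | mnk_intersecting m n k F) #|F|.

Definition h (m n k : nat) : nat :=
  'C(n, k) + \sum_(1 <= i < 2 * k - n) 'C(n - 1, k - i - 1) * 'C(m - n, i).

(* Write S = [2k-2].  A member A of an (m,2k-2,k)-intersecting family F that
   is not inside S meets S in exactly k-1 points: otherwise S \ A contains a
   k-subset of S, a member of F disjoint from A.  So F consists of the
   k-subsets of S and of sets b ∪ B with B a (k-1)-subset of S and b ∉ S.
   As |S| = 2(k-1), these B come in complementary pairs {B, S \ B}; if both
   members of a pair extend, all their extensions use one common point b,
   so a pair contributes at most max(2, m-2k+2) = m-2k+2 sets.  Summing over
   the pairs gives |F| <= h, and a star attains it.  At equality, as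
   m-2k+2 >= 3, every pair has one member extended by all points outside S and
   one not extended at all; the fully extended B form the family F*, which is
   intersecting and takes one set from each pair, hence is maximum. *)

From mathcomp Require Import all_boot zify.
Set Implicit Arguments. Unset Strict Implicit. Unset Printing Implicit Defensive.

Lemma bin_mid_double j : 'C((j + j).+2, j.+1) = 2 * 'C((j + j).+1, j).
Proof.
have := @bin_sub (j + j).+1 j; rewrite (_ : (j + j).+1 - j = j.+1) => [e|]; last by lia.
by rewrite binS e ?mul2n ?addnn //; lia.
Qed.

Section FiniteSets.
Variable T : finType.
Implicit Types (A B C S X : {set T}) (F G Fs : {set {set T}}).

Lemma intersectingP {F : {set {set T}}} :
  reflect (forall A B, A \in F -> B \in F -> A :&: B != set0) (intersecting F).
Proof.
apply: (iffP forallP) => [H A B hA hB | H A].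
  by move/implyP/(_ hA)/forallP/(_ B)/implyP: (H A); apply.
by apply/implyP => hA; apply/forallP => B; apply/implyP; apply: H.
Qed.

Lemma setI_neq0_card S A B :
  A \subset S -> B \subset S -> #|S| < #|A| + #|B| -> A :&: B != set0.
Proof.
move=> sAS sBS ltS; apply: contraTneq ltS => AB0.
rewrite -leqNgt -(cardsUI A B) AB0 cards0 addn0.
by apply: subset_leq_card; rewrite subUset sAS.
Qed.

Lemma setDDK S B : B \subset S -> S :\: (S :\: B) = B.
Proof. by move=> sBS; rewrite setDDr setDv set0U (setIidPr sBS). Qed.

Lemma setU1I_notin S B b : B \subset S -> b \notin S -> (b |: B) :&: S = B.
Proof.
move=> sBS bS; rewrite setIUl (setIidPl sBS).
suff -> : [set b] :&: S = set0 by rewrite set0U.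
by apply/setP => x; rewrite !inE; case: eqP => // ->; rewrite (negbTE bS).
Qed.

Lemma setU1_notin_inj S B C b c :
  B \subset S -> C \subset S -> b \notin S -> c \notin S ->
  b |: B = c |: C -> b = c /\ B = C.
Proof.
move=> sBS sCS bS cS eBC; split; last first.
  by rewrite -(setU1I_notin sBS bS) -(setU1I_notin sCS cS) eBC.
have : b \in c |: C by rewrite -eBC setU11.
by case/setU1P => // /(subsetP sCS) bS'; rewrite bS' in bS.
Qed.

Definition draws S k := [set A : {set T} | A \subset S & #|A| == k].

Lemma card_draws S k : #|draws S k| = 'C(#|S|, k).
Proof. exact: cards_draws. Qed.

Lemma drawsP S k A : reflect (A \subset S /\ #|A| = k) (A \in draws S k).
Proof. by rewrite inE; apply: (iffP andP) => -[-> /eqP]. Qed.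

Lemma subset_of_card S k : k <= #|S| -> exists2 C : {set T}, C \subset S & #|C| = k.
Proof.
move=> le_kS; have : 0 < #|draws S k| by rewrite card_draws bin_gt0.
by rewrite card_gt0 => /set0Pn[C /drawsP[]]; exists C.
Qed.

Section Complement.
Variables (S : {set T}) (j : nat).
Hypothesis cardS : #|S| = j + j.

Lemma draws_compl B : B \in draws S j -> S :\: B \in draws S j.
Proof.
case/drawsP=> sBS cB; apply/drawsP; split; first exact: subsetDl.
by rewrite cardsD (setIidPr sBS); lia.
Qed.

Lemma sum_draws_compl (f : {set T} -> nat) :
  \sum_(B in draws S j) f (S :\: B) = \sum_(B in draws S j) f B.
Proof.
rewrite [RHS](reindex_onto (fun B => S :\: B) (fun B => S :\: B)) /=.
  apply: eq_bigl => B; apply/idP/andP => [hB | [hB /eqP <-]].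
    by rewrite draws_compl // setDDK //; case/drawsP: hB.
  exact: draws_compl.
by move=> B /drawsP[sBS _]; rewrite setDDK.
Qed.

Lemma intersecting_draws_half G :
  G \subset draws S j -> intersecting G -> 2 * #|G| <= 'C(#|S|, j).
Proof.
move=> sGD /intersectingP GI.
pose Gc := [set S :\: B | B in G].
have sGc : {in G, forall B, B \subset S}.
  by move=> B /(subsetP sGD) /drawsP[].
have cardGc : #|Gc| = #|G|.
  apply: card_in_imset => B1 B2 h1 h2 /(congr1 (setD S)).
  by rewrite !setDDK ?sGc.
have disjGGc : [disjoint G & Gc].
  apply/pred0P => B /=; apply/andP => -[hB /imsetP[B' hB' eB]].
  by move: (GI _ _ hB hB'); rewrite eB setDE -setIA [~: _ :&: _]setIC setICr setI0 eqxx.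
have sGGc : G :|: Gc \subset draws S j.
  rewrite subUset sGD; apply/subsetP => _ /imsetP[B hB ->].
  exact/draws_compl/(subsetP sGD).
have := subset_leq_card sGGc.
by rewrite cardsU (disjoint_setI0 disjGGc) cards0 subn0 cardGc card_draws addnn mul2n.
Qed.

End Complement.

Lemma intersecting_star S j x : intersecting [set B in draws S j | x \in B].
Proof.
apply/intersectingP => A B /[!inE] /andP[_ xA] /andP[_ xB].
by apply/set0Pn; exists x; rewrite inE xA.
Qed.

Lemma card_star S j x : x \in S ->
  #|[set B in draws S j.+1 | x \in B]| = 'C(#|S|.-1, j).
Proof.
move=> xS; rewrite (cardsD1 x S) xS -card_draws.
have injD1 : {in [set B in draws S j.+1 | x \in B] &, injective (fun B => B :\ x)}.
  move=> B1 B2 /[!inE] /andP[_ xB1] /andP[_ xB2] e.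
  by rewrite -(setD1K xB1) -(setD1K xB2) e.
rewrite -(card_in_imset injD1).
apply: eq_card => B; apply/imsetP/drawsP => [[B' + ->] | [sBS cB]].
  rewrite inE => /andP[/drawsP[sB'S cB'] xB'].
  split; first exact: setSD.
  by move: cB'; rewrite (cardsD1 x B') xB' => -[].
have xB : x \notin B by apply/negP => /(subsetP sBS); rewrite !inE eqxx.
exists (x |: B); last by rewrite setU1K.
rewrite !inE eqxx cardsU1 xB cB add1n eqxx !andbT /= subUset sub1set xS.
exact: subset_trans sBS (subD1set _ _).
Qed.

Section Extensions.
Variables (S : {set T}) (F : {set {set T}}).
Hypothesis FI : intersecting F.

Definition ext B := [set b in ~: S | b |: B \in F].

Lemma ext_sub B : ext B \subset ~: S.
Proof. by apply/subsetP => b /[!inE] /andP[]. Qed.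

Lemma ext_compl_eq B b c :
  B \subset S -> b \in ext B -> c \in ext (S :\: B) -> b = c.
Proof.
move=> sBS /[!inE] /andP[bS hb] /andP[cS hc].
have /set0Pn[z] := intersectingP FI _ _ hb hc.
rewrite inE => /andP[/setU1P[-> | zB] /setU1P[zc | /setDP[zS zB']]] //.
- by rewrite zS in bS.
- by rewrite -zc (subsetP sBS) in cS.
- by rewrite zB in zB'.
Qed.

Lemma ext_compl_cases B : B \subset S ->
  [\/ ext B = set0, ext (S :\: B) = set0 |
       #|ext B| <= 1 /\ #|ext (S :\: B)| <= 1].
Proof.
move=> sBS; have [-> | [b hb]] := set_0Vmem (ext B); first by constructor 1.
have [-> | [c hc]] := set_0Vmem (ext (S :\: B)); first by constructor 2.
constructor 3; split; apply/card_le1_eqP.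
  by move=> x y hx hy; rewrite (ext_compl_eq sBS hx hc) (ext_compl_eq sBS hy hc).
by move=> x y hx hy; rewrite -(ext_compl_eq sBS hb hx) -(ext_compl_eq sBS hb hy).
Qed.

Lemma card_ext_compl_le B : 2 <= #|~: S| -> B \subset S ->
  #|ext B| + #|ext (S :\: B)| <= #|~: S|.
Proof.
move=> ltS sBS; have := subset_leq_card (ext_sub B).
have := subset_leq_card (ext_sub (S :\: B)).
by case: (ext_compl_cases sBS) => [->|->|[]]; rewrite ?cards0; lia.
Qed.

Lemma ext_compl_full B : 3 <= #|~: S| -> B \subset S ->
  #|ext B| + #|ext (S :\: B)| = #|~: S| -> ext B = set0 \/ ext B = ~: S.
Proof.
move=> ltS sBS; case: (ext_compl_cases sBS) => [->|->|[]]; [by left | | lia].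
rewrite cards0 addn0 => card_ext; right.
by apply/eqP; rewrite eqEcard ext_sub card_ext leqnn.
Qed.

Lemma intersecting_full_ext j :
  1 < #|~: S| -> intersecting [set B in draws S j | ext B == ~: S].
Proof.
case/card_gt1P => b [c [bS cS bc]].
apply/intersectingP => B C /setIdP[/drawsP[sBS _] /eqP extB].
case/setIdP => /drawsP[sCS _] /eqP extC.
have hb : b |: B \in F by move: bS; rewrite -extB inE => /andP[].
have hc : c |: C \in F by move: cS; rewrite -extC inE => /andP[].
have /set0Pn[z] := intersectingP FI _ _ hb hc.
rewrite inE => /andP[/setU1P[-> | zB] /setU1P[zc | zC]].
- by rewrite zc eqxx in bc.
- by move: bS; rewrite inE (subsetP sCS).
- by move: cS; rewrite inE -zc (subsetP sBS).
- by apply/set0Pn; exists z; rewrite inE zB.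
Qed.

End Extensions.

Section LiftedFamilies.
Variables (S : {set T}) (k : nat).
Hypotheses (cardS : #|S| + 2 = k + k) (k_ge2 : 1 < k).

Let bin_half : 'C(#|S|, k.-1) = 2 * 'C(#|S|.-1, k.-2).
Proof.
have [j kj] : exists j, k = j.+2 by exists k.-2; lia.
have -> : #|S| = (j + j).+2 by lia.
by rewrite kj bin_mid_double.
Qed.

Lemma card_intersecting_draws_le G :
  G \subset draws S k.-1 -> intersecting G -> #|G| <= 'C(#|S|.-1, k.-2).
Proof.
move=> sGD GI; rewrite -(leq_pmul2l (isT : 0 < 2)) -bin_half.
by apply: intersecting_draws_half sGD GI; lia.
Qed.

Definition sk_intersecting F :=
  [&& intersecting F, draws S k \subset F & F \subset draws setT k].

Definition lift_family Fs :=
  draws S k :|: [set b |: B | B in Fs, b in ~: S].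

Section OneFamily.
Variable F : {set {set T}}.
Hypothesis skF : sk_intersecting F.

Let FI : intersecting F. Proof. by case/and3P: skF. Qed.
Let sDF : draws S k \subset F. Proof. by case/and3P: skF. Qed.
Let cardF A : A \in F -> #|A| = k.
Proof. by case/and3P: skF => _ _ /subsetP sFD /sFD /drawsP[]. Qed.

Lemma card_setD_member A : A \in F -> A \notin draws S k -> #|A :\: S| = 1.
Proof.
move=> hA nA; have cA := cardF hA; have cAS := cardsID S A.
case E: #|A :\: S| => [|[|d]] //.
  by move/eqP: E nA; rewrite cards_eq0 setD_eq0 inE cA eqxx andbT => ->.
have [C sC cC] : exists2 C : {set T}, C \subset S :\: A & #|C| = k.
  by apply: subset_of_card; rewrite cardsD setIC; lia.
have CF : C \in F by apply/(subsetP sDF)/drawsP; rewrite (subset_trans sC) ?subsetDl.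
have /set0Pn[z] := intersectingP FI _ _ CF hA.
by rewrite inE => /andP[/(subsetP sC) /setDP[_ /negP]].
Qed.

Lemma member_decomp A : A \in F -> A \notin draws S k ->
  A :&: S \in draws S k.-1 /\ exists2 b, b \in ext S F (A :&: S) & A = b |: (A :&: S).
Proof.
move=> hA nA; have /eqP/cards1P[b Eb] := card_setD_member hA nA.
have eA : A = b |: (A :&: S) by rewrite setUC -Eb setID.
have := cardsID S A; rewrite Eb cards1 (cardF hA) => cAS.
split; first by apply/drawsP; split; [exact: subsetIr | lia].
exists b => //; rewrite inE -eA hA andbT.
by rewrite in_setC; have /setDP[] : b \in A :\: S by rewrite Eb set11.
Qed.

Lemma card_sk_intersecting :
  #|F| = 'C(#|S|, k) + \sum_(B in draws S k.-1) #|ext S F B|.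
Proof.
rewrite -(cardsID (draws S k) F) (setIidPr sDF) card_draws; congr (_ + _).
rewrite -sum1_card (partition_big (fun A => A :&: S) (mem (draws S k.-1))) /=; last first.
  by move=> A /setDP[hA nA]; have [] := member_decomp hA nA.
apply: eq_bigr => B /drawsP[sBS _]; rewrite sum1_card.
have inj : {in ext S F B &, injective (fun b => b |: B)}.
  move=> b c /setIdP[bS _] /setIdP[cS _].
  by rewrite !in_setC in bS cS => /(setU1_notin_inj sBS sBS bS cS) [].
rewrite -(card_in_imset inj); apply: eq_card => A; apply/andP/imsetP.
  case=> /setDP[hA nA] /eqP AS; have [_ [b hb eA]] := member_decomp hA nA.
  by exists b; rewrite -AS.
case=> b /setIdP[bS hb] ->; rewrite in_setC in bS.
rewrite setU1I_notin // eqxx in_setD hb andbT; split => //.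
by apply: contra bS => /drawsP[/subsetP sAS _]; apply/sAS/setU11.
Qed.

Lemma sum_ext_leqif : 2 <= #|~: S| ->
  2 * \sum_(B in draws S k.-1) #|ext S F B| <= #|~: S| * 'C(#|S|, k.-1)
    ?= iff [forall (B | B \in draws S k.-1),
              #|ext S F B| + #|ext S F (S :\: B)| == #|~: S|].
Proof.
move=> ltS; have cardS' : #|S| = k.-1 + k.-1 by lia.
rewrite mul2n -addnn -{2}(sum_draws_compl cardS' (fun B => #|ext S F B|)).
rewrite -big_split /= -card_draws mulnC -sum_nat_const.
apply: leqif_sum => B /drawsP[sBS _]; apply: leqif_eq.
exact: card_ext_compl_le.
Qed.

Lemma card_sk_intersecting_le : 2 <= #|~: S| ->
  #|F| <= 'C(#|S|, k) + 'C(#|S|.-1, k.-2) * #|~: S|.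
Proof.
move=> ltS; rewrite card_sk_intersecting leq_add2l -(leq_pmul2l (isT : 0 < 2)).
by rewrite mulnA -bin_half [_ * #|~: S|]mulnC (sum_ext_leqif ltS).
Qed.

Lemma ext_dichotomy : 3 <= #|~: S| ->
  #|F| = 'C(#|S|, k) + 'C(#|S|.-1, k.-2) * #|~: S| ->
  forall B, B \in draws S k.-1 -> ext S F B = set0 \/ ext S F B = ~: S.
Proof.
move=> ltS; rewrite card_sk_intersecting => /addnI sum_eq B hB.
have := (sum_ext_leqif (ltnW ltS)).2.
rewrite sum_eq mulnA -bin_half [_ * #|~: S|]mulnC eqxx => /esym/forall_inP.
by move/(_ B hB)/eqP; apply: ext_compl_full => //; case/drawsP: hB.
Qed.

Lemma eq_lift_family_full_ext :
  (forall B, B \in draws S k.-1 -> ext S F B = set0 \/ ext S F B = ~: S) ->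
  F = lift_family [set B in draws S k.-1 | ext S F B == ~: S].
Proof.
move=> dich; apply/setP => A; apply/idP/idP => [hA | /setUP[/(subsetP sDF) // |]].
  have [AD | nA] := boolP (A \in draws S k); first by rewrite inE AD.
  have [hB [b hb eA]] := member_decomp hA nA.
  have extB : ext S F (A :&: S) = ~: S.
    by case: (dich _ hB) => // E; rewrite E inE in hb.
  rewrite eA inE; apply/orP; right; apply/imset2P; exists (A :&: S) b => //.
    by rewrite inE hB extB eqxx.
  by rewrite -extB.
case/imset2P=> B b /setIdP[_ /eqP extB]; rewrite -extB => /setIdP[_ ?] ->.
done.
Qed.

End OneFamily.

Lemma lift_family_sk_intersecting Fs : Fs \subset draws S k.-1 -> intersecting Fs ->
  sk_intersecting (lift_family Fs).
Proof.
move=> sFsD FsI; have k_gt0 : 0 < k by lia.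
have card_core X : (X \in draws S k) || (X \in Fs) ->
    X \subset S /\ k.-1 + (X \notin Fs) <= #|X|.
  case: (boolP (X \in Fs)) => [/(subsetP sFsD)/drawsP[-> ->] | _].
    by rewrite addn0.
  by rewrite orbF => /drawsP[-> ->]; rewrite addn1 prednK.
have core A : A \in lift_family Fs ->
    exists2 X : {set T}, X \subset A & (X \in draws S k) || (X \in Fs).
  case/setUP => [hA | /imset2P[B b hB _ ->]]; first by exists A; rewrite ?hA.
  by exists B; rewrite ?subsetUr ?hB ?orbT.
apply/and3P; split; last 2 first.
- exact: subsetUl.
- apply/subsetP => A /setUP[/drawsP[_ cA] | ].
    by apply/drawsP; rewrite subsetT.
  case/imset2P=> B b /(subsetP sFsD)/drawsP[sBS cB] bS ->.
  apply/drawsP; rewrite subsetT cardsU1 cB; split => //.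
  have -> : b \notin B by apply: contraL bS => /(subsetP sBS); rewrite inE negbK.
  by rewrite add1n prednK.
apply/intersectingP => A A' /core[X sXA /card_core[sXS cX]].
case/core=> X' sXA' /card_core[sXS' cX'].
apply: subset_neq0 (setISS sXA sXA') _.
have [XFs | nXFs] := boolP (X \in Fs); have [X'Fs | nX'Fs] := boolP (X' \in Fs).
- exact: (intersectingP FsI).
all: by apply: setI_neq0_card sXS sXS' _; rewrite /= in cX cX'; lia.
Qed.

Lemma card_lift_family Fs : Fs \subset draws S k.-1 ->
  #|lift_family Fs| = 'C(#|S|, k) + #|Fs| * #|~: S|.
Proof.
move=> sFsD; rewrite cardsU card_draws curry_imset2X card_in_imset ?cardsX; last first.
  move=> [B b] [C c] /setXP[/(subsetP sFsD)/drawsP[sBS _] bS].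
  case/setXP => /(subsetP sFsD)/drawsP[sCS _] cS /=.
  by rewrite !inE in bS cS => /(setU1_notin_inj sBS sCS bS cS) [-> ->].
suff -> : draws S k :&: (uncurry (fun B b => b |: B) @: setX Fs (~: S)) = set0.
  by rewrite cards0 subn0.
apply/setP => A; rewrite in_set0 in_setI; apply/negP => /andP[/drawsP[sAS _]].
case/imsetP => -[B b] /setXP[_ bS] /= eA.
by move: bS; rewrite inE (subsetP sAS) // eA setU11.
Qed.

Lemma max_card_sk_intersecting : 2 <= #|~: S| ->
  \max_(F | sk_intersecting F) #|F| = 'C(#|S|, k) + 'C(#|S|.-1, k.-2) * #|~: S|.
Proof.
move=> ltS; apply/eqP; rewrite eqn_leq; apply/andP; split.
  by apply/bigmax_leqP => F skF; apply: card_sk_intersecting_le.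
have [x xS] : exists x, x \in S by apply/set0Pn; rewrite -card_gt0; lia.
set St := [set B in draws S k.-1 | x \in B].
have sStD : St \subset draws S k.-1 by apply/subsetP => B /setIdP[].
have skSt := lift_family_sk_intersecting sStD (intersecting_star _ _ _).
apply: leq_trans (leq_bigmax_cond _ skSt); rewrite card_lift_family //.
by rewrite /St (_ : k.-1 = k.-2.+1) ?card_star //; lia.
Qed.

Lemma sk_intersecting_extremal F : sk_intersecting F -> 3 <= #|~: S| ->
  #|F| = 'C(#|S|, k) + 'C(#|S|.-1, k.-2) * #|~: S| ->
  exists Fs, [/\ Fs \subset draws S k.-1, intersecting Fs,
                 #|Fs| = 'C(#|S|.-1, k.-2) & F = lift_family Fs].
Proof.
move=> skF ltS cardF; have FI : intersecting F by case/and3P: skF.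
set Fs := [set B in draws S k.-1 | ext S F B == ~: S].
have eF : F = lift_family Fs := eq_lift_family_full_ext skF (ext_dichotomy skF ltS cardF).
have sFsD : Fs \subset draws S k.-1 by apply/subsetP => B /setIdP[].
exists Fs; split => //; first by apply: intersecting_full_ext => //; lia.
apply/eqP; rewrite -(eqn_pmul2r (_ : 0 < #|~: S|)); last lia.
by move: cardF; rewrite {1}eF card_lift_family // => /addnI ->.
Qed.

End LiftedFamilies.
End FiniteSets.



Lemma h_diag m n k : n + 2 = k + k -> h m n k = 'C(n, k) + 'C(n.-1, k.-2) * (m - n).
Proof.
move=> nk; rewrite /h.
have -> : 2 * k - n = 2 by lia.
have -> : n - 1 = n.-1 by lia.
rewrite big_nat1 bin1.
by have -> : k - 1 - 1 = k.-2 by lia.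
Qed.

Lemma card_seg m n : n <= m -> #|seg m n| = n.
Proof.
move=> le_nm; have -> : seg m n = [set widen_ord le_nm i | i in 'I_n].
  apply/setP => i; rewrite inE; apply/idP/imsetP => [lt_in | [j _ ->]].
    by exists (Ordinal lt_in) => //; apply: val_inj.
  exact: (ltn_ord j).
rewrite card_imset ?card_ord // => i j /(congr1 val) eq_ij.
exact: val_inj.
Qed.

Lemma setC_seg m n : ~: seg m n = [set b : 'I_m | n <= b].
Proof. by apply/setP => b; rewrite !inE -leqNgt. Qed.

Lemma ksubsets_draws m a k : ksubsets m a k = draws (seg m a) k.
Proof. by apply/setP => A; rewrite !inE andbC. Qed.

Lemma mnk_intersectingE m n k F :
  mnk_intersecting m n k F = sk_intersecting (seg m n) k F.
Proof.
rewrite /mnk_intersecting !ksubsets_draws.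
by have -> : seg m m = setT by apply/setP => i; rewrite !inE ltn_ord.
Qed.

Theorem theorem9 (k m : nat) :
  2 <= k -> 2 * k < m ->
  alpha m (2 * k - 2) k = h m (2 * k - 2) k /\
  forall F : {set {set 'I_m}},
    mnk_intersecting m (2 * k - 2) k F ->
    #|F| = alpha m (2 * k - 2) k ->
    exists Fstar : {set {set 'I_m}},
      [/\ Fstar \subset ksubsets m (2 * k - 2) (k - 1),
          intersecting Fstar,
          (forall G : {set {set 'I_m}},
             G \subset ksubsets m (2 * k - 2) (k - 1) -> intersecting G ->
             #|G| <= #|Fstar|) &
          F = ksubsets m (2 * k - 2) k :|:
              [set A :|: [set b] | A in Fstar, b in [set b : 'I_m | 2 * k - 2 <= b]]].
Proof.
move=> k_ge2 km; set n := 2 * k - 2; set S := seg m n.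
have cardS : #|S| = n by rewrite card_seg; lia.
have cardO : #|~: S| = m - n by rewrite cardsCs setCK card_ord cardS; lia.
have hS : #|S| + 2 = k + k by rewrite cardS; lia.
have alphaE : alpha m n k = h m n k.
  rewrite /alpha (eq_bigl _ _ (@mnk_intersectingE m n k)) max_card_sk_intersecting //.
    by rewrite h_diag ?cardS ?cardO //; lia.
  by rewrite cardO; lia.
split => // F; rewrite mnk_intersectingE alphaE h_diag; last lia.
move=> skF cardF; have O3 : 3 <= #|~: S| by rewrite cardO; lia.
have extremal : #|F| = 'C(#|S|, k) + 'C(#|S|.-1, k.-2) * #|~: S|.
  by rewrite cardF cardS cardO.
have [Fs [sFsD FsI cardFs ->]] := sk_intersecting_extremal hS k_ge2 skF O3 extremal.
exists Fs; rewrite subn1 !ksubsets_draws; split => //.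
  by move=> G sGD GI; rewrite cardFs card_intersecting_draws_le.
rewrite /lift_family setC_seg; congr (_ :|: _).
by apply: eq_in_imset2 => B b _ _; apply: setUC.
Qed.
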